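(* Let $QI^+(\mathbb{R})$ be the index $2$ subgroup of $QI(\mathbb{R})$ consisting of classes of quasi-isometries fixing the ends $+\infty$ and $-\infty$. Let $Q_+$ (resp. $Q_-$) be the subgroup of $QI(\mathbb{R})$ consisting of classes $[f]$ with $f$ a quasi-isometry that is the identity near $-\infty$ (resp. near $+\infty$). Then $Q_+$ and $Q_-$ are subgroups of $QI^+(\mathbb{R})$, and $QI^+(\mathbb{R})\cong Q_+\times Q_-$; more precisely, $Q_+\cap Q_-$ is trivial, elements of $Q_+$ commute with elements of $Q_-$, and $QI^+(\mathbb{R})=Q_+Q_-$, so $QI^+(\mathbb{R})$ is the internal direct product of $Q_+$ and $Q_-$.
   Context: A map $f:\mathbb{R}\to\mathbb{R}$ is a quasi-isometry if there is $K>1$ such that $\frac{1}{K}|x_1-x_2|-K\le |f(x_1)-f(x_2)|\le K|x_1-x_2|+K$ for all $x_1,x_2$, and every $y\in\mathbb{R}$ is within distance $K$ of some $f(x)$. Two quasi-isometries are equivalent if their difference is bounded; $QI(\mathbb{R})$ is the group of equivalence classes $[f]$ under $[f][g]=[f\circ g]$. A quasi-isometry $f$ fixes the ends if $f(t)\to+\infty$ as $t\to+\infty$ and $f(t)\to-\infty$ as $t\to-\infty$. ''$f$ is the identity near $-\infty$'' means there is $c\in\mathbb{R}$ with $f(t)=t$ for all $t\le c$ (similarly near $+\infty$: $f(t)=t$ for all $t\ge c$). *)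

From Stdlib Require Import Reals Lra.
Open Scope R_scope.

Definition is_QI (f : R -> R) : Prop :=
  exists K : R, 1 < K /\
    (forall x1 x2 : R,
        Rabs (x1 - x2) / K - K <= Rabs (f x1 - f x2) /\
        Rabs (f x1 - f x2) <= K * Rabs (x1 - x2) + K) /\
    (forall y : R, exists x : R, Rabs (y - f x) <= K).

(* Equivalence of quasi-isometries: bounded difference, i.e. [f] = [g] in QI(R). *)
Definition qi_equiv (f g : R -> R) : Prop :=
  exists C : R, forall x : R, Rabs (f x - g x) <= C.

Definition fixes_ends (f : R -> R) : Prop :=
  (forall M : R, exists T : R, forall t : R, T <= t -> M <= f t) /\
  (forall M : R, exists T : R, forall t : R, t <= T -> f t <= M).

Definition id_near_minf (f : R -> R) : Prop :=
  exists c : R, forall t : R, t <= c -> f t = t.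
Definition id_near_pinf (f : R -> R) : Prop :=
  exists c : R, forall t : R, c <= t -> f t = t.

(* Membership of the class [f] in QI^+(R), Q_+ and Q_- respectively:
   the class has a representative with the given property. *)
Definition in_QIplus (f : R -> R) : Prop :=
  is_QI f /\ exists g, is_QI g /\ fixes_ends g /\ qi_equiv f g.
Definition in_Qplus (f : R -> R) : Prop :=
  is_QI f /\ exists g, is_QI g /\ id_near_minf g /\ qi_equiv f g.
Definition in_Qminus (f : R -> R) : Prop :=
  is_QI f /\ exists g, is_QI g /\ id_near_pinf g /\ qi_equiv f g.

Definition qi_subgroup (P : (R -> R) -> Prop) : Prop :=
  P (fun x => x) /\
  (forall f g, P f -> P g -> P (fun x => f (g x))) /\
  (forall f, P f -> exists h, P h /\
      qi_equiv (fun x => f (h x)) (fun x => x) /\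
      qi_equiv (fun x => h (f x)) (fun x => x)).

(* Up to bounded error, an element of Q_+ is the identity on a left half line,
   and it tends to +oo at +oo; the reflection [x |-> - x] exchanges Q_+ and
   Q_-.  For [f] in Q_+ and [g] in Q_-, [f o g] and [g o f] agree outside a
   bounded interval, and an element of Q_+ and Q_- is close to the identity
   outside one; coarse Lipschitz maps are bounded on bounded intervals, which
   gives commutation and the trivial intersection.  Conversely, a
   quasi-isometry [f] fixing the ends with [f 0 = 0] is coarsely monotone, so
   it maps each half line coarsely into itself, and gluing [f] with the
   identity on either half line gives [g] in Q_+ and [h] in Q_- with
   [f ~ g o h]. *)

From Stdlib Require Import Reals Lra Psatz Classical ClassicalEpsilon.
Open Scope R_scope.

Definition coarse_lipschitz (A : R) (f : R -> R) : Prop :=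
  forall x1 x2, Rabs (f x1 - f x2) <= A * Rabs (x1 - x2) + A.

Definition qi_embedding (A : R) (f : R -> R) : Prop :=
  coarse_lipschitz A f /\ forall x1 x2, Rabs (x1 - x2) <= A * Rabs (f x1 - f x2) + A.

Definition coarsely_dense (A : R) (f : R -> R) : Prop :=
  forall y, exists x, Rabs (y - f x) <= A.

Lemma dist_triang a b c : Rabs (a - c) <= Rabs (a - b) + Rabs (b - c).
Proof. replace (a - c) with ((a - b) + (b - c)) by ring. apply Rabs_triang. Qed.

Lemma Rabs_sub_triang a b : Rabs (a - b) <= Rabs a + Rabs b.
Proof. unfold Rminus. rewrite <- (Rabs_Ropp b). apply Rabs_triang. Qed.

Lemma coarse_lipschitz_nonneg A f : coarse_lipschitz A f -> 0 <= A.
Proof.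
  intros Hf. pose proof (Hf 0 0) as H. rewrite !Rminus_diag, Rabs_R0 in H. lra.
Qed.

Lemma coarsely_dense_nonneg A f : coarsely_dense A f -> 0 <= A.
Proof. intros Hf. destruct (Hf 0) as [x Hx]. pose proof (Rabs_pos (0 - f x)). lra. Qed.

Lemma is_QI_qi_embedding f :
  is_QI f -> exists A, 1 <= A /\ qi_embedding A f /\ coarsely_dense A f.
Proof.
  intros [K [HK [Hb Hd]]]. exists (K * K). split; [nra|split; [split|]].
  - intros x1 x2. destruct (Hb x1 x2) as [_ H].
    assert (0 <= (K * K - K) * Rabs (x1 - x2)) by (apply Rmult_le_pos; [nra|apply Rabs_pos]).
    nra.
  - intros x1 x2. destruct (Hb x1 x2) as [H _].
    set (r := Rabs (x1 - x2)) in *. set (d := Rabs (f x1 - f x2)) in *.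
    assert (0 <= d) by apply Rabs_pos.
    assert (Hr : r <= K * (d + K)).
    { replace r with (K * (r / K)) by (field; lra). apply Rmult_le_compat_l; lra. }
    assert (0 <= (K * K - K) * d) by (apply Rmult_le_pos; nra).
    nra.
  - intros y. destruct (Hd y) as [x Hx]. exists x. nra.
Qed.

Lemma qi_embedding_is_QI A C f : qi_embedding A f -> coarsely_dense C f -> is_QI f.
Proof.
  intros [Hl Hu] Hd. pose proof (coarse_lipschitz_nonneg _ _ Hl).
  pose proof (coarsely_dense_nonneg _ _ Hd).
  exists (A + C + 2). set (K := A + C + 2).
  assert (KA : A + 1 <= K) by (unfold K; lra). assert (KC : C + 1 <= K) by (unfold K; lra).
  assert (K2 : 2 <= K) by (unfold K; lra). clearbody K. split; [lra|split].
  - intros x1 x2. specialize (Hl x1 x2). specialize (Hu x1 x2).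
    set (r := Rabs (x1 - x2)) in *. set (d := Rabs (f x1 - f x2)) in *.
    assert (0 <= r) by apply Rabs_pos. assert (0 <= d) by apply Rabs_pos.
    split; [|nra].
    unfold Rdiv.
    assert (r * / K <= (K * d + K * K) * / K).
    { apply Rmult_le_compat_r; [left; apply Rinv_0_lt_compat|]; nra. }
    replace ((K * d + K * K) * / K) with (d + K) in * by (field; lra). lra.
  - intros y. destruct (Hd y) as [x Hx]. exists x. lra.
Qed.

Lemma qi_embedding_mono A A' f : A <= A' -> qi_embedding A f -> qi_embedding A' f.
Proof.
  intros HA [Hl Hu]. split; intros x1 x2;
    [specialize (Hl x1 x2)|specialize (Hu x1 x2)];
    pose proof (Rabs_pos (x1 - x2)); pose proof (Rabs_pos (f x1 - f x2)); nra.
Qed.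

Lemma qi_embedding_id A : 1 <= A -> qi_embedding A (fun x => x).
Proof. intros HA. split; intros x1 x2; pose proof (Rabs_pos (x1 - x2)); nra. Qed.

Lemma is_QI_id : is_QI (fun x => x).
Proof.
  apply (qi_embedding_is_QI 1 0); [apply qi_embedding_id; lra|].
  intros y. exists y. rewrite Rminus_diag, Rabs_R0. lra.
Qed.

Lemma qi_embedding_comp A B f g :
  qi_embedding A f -> qi_embedding B g -> qi_embedding (A * B + A + B) (fun x => f (g x)).
Proof.
  intros [Fl Fu] [Gl Gu]. pose proof (coarse_lipschitz_nonneg _ _ Fl).
  pose proof (coarse_lipschitz_nonneg _ _ Gl).
  split; intros x y; specialize (Fl (g x) (g y)); specialize (Fu (g x) (g y));
    specialize (Gl x y); specialize (Gu x y);
    pose proof (Rabs_pos (x - y)); pose proof (Rabs_pos (g x - g y));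
    pose proof (Rabs_pos (f (g x) - f (g y))); nra.
Qed.

Lemma coarsely_dense_comp A B C f g : coarse_lipschitz A f -> coarsely_dense C f ->
  coarsely_dense B g -> coarsely_dense (C + A * B + A) (fun x => f (g x)).
Proof.
  intros Fl Fd Gd z. pose proof (coarse_lipschitz_nonneg _ _ Fl).
  destruct (Fd z) as [y Hy]. destruct (Gd y) as [x Hx]. exists x.
  pose proof (Fl y (g x)). pose proof (dist_triang z (f y) (f (g x))). nra.
Qed.

Lemma is_QI_comp f g : is_QI f -> is_QI g -> is_QI (fun x => f (g x)).
Proof.
  intros Qf Qg.
  destruct (is_QI_qi_embedding f Qf) as [A [_ [Ef Df]]].
  destruct (is_QI_qi_embedding g Qg) as [B [_ [Eg Dg]]].
  exact (qi_embedding_is_QI _ _ _ (qi_embedding_comp _ _ _ _ Ef Eg)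
           (coarsely_dense_comp _ _ _ _ _ (proj1 Ef) Df Dg)).
Qed.

Lemma qi_equiv_refl f : qi_equiv f f.
Proof. exists 0. intros x. rewrite Rminus_diag, Rabs_R0. lra. Qed.

Lemma qi_equiv_sym f g : qi_equiv f g -> qi_equiv g f.
Proof. intros [C H]. exists C. intros x. rewrite Rabs_minus_sym. apply H. Qed.

Lemma qi_equiv_trans f g h : qi_equiv f g -> qi_equiv g h -> qi_equiv f h.
Proof.
  intros [C1 H1] [C2 H2]. exists (C1 + C2). intros x.
  pose proof (dist_triang (f x) (g x) (h x)). specialize (H1 x). specialize (H2 x). lra.
Qed.

Lemma qi_equiv_comp A f f' g g' : coarse_lipschitz A f ->
  qi_equiv f f' -> qi_equiv g g' -> qi_equiv (fun x => f (g x)) (fun x => f' (g' x)).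
Proof.
  intros Hf [C1 H1] [C2 H2]. pose proof (coarse_lipschitz_nonneg _ _ Hf).
  exists (A * C2 + A + C1). intros x.
  pose proof (Hf (g x) (g' x)). specialize (H1 (g' x)). specialize (H2 x).
  pose proof (dist_triang (f (g x)) (f (g' x)) (f' (g' x))). nra.
Qed.

Lemma right_qinv_is_QI A B f h :
  qi_embedding A f -> (forall y, Rabs (y - f (h y)) <= B) -> is_QI h.
Proof.
  intros [Hl Hu] Hh. pose proof (coarse_lipschitz_nonneg _ _ Hl).
  assert (0 <= B) by (pose proof (Hh 0); pose proof (Rabs_pos (0 - f (h 0))); lra).
  assert (Hfh : forall a b,
    Rabs (f (h a) - f (h b)) <= Rabs (a - b) + 2 * B /\
    Rabs (a - b) <= Rabs (f (h a) - f (h b)) + 2 * B).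
  { intros a b. pose proof (Hh a). pose proof (Hh b).
    assert (Rabs (f (h a) - a) <= B) by (rewrite Rabs_minus_sym; apply Hh).
    assert (Rabs (f (h b) - b) <= B) by (rewrite Rabs_minus_sym; apply Hh).
    pose proof (dist_triang (f (h a)) a (f (h b))). pose proof (dist_triang a b (f (h b))).
    pose proof (dist_triang a (f (h a)) b). pose proof (dist_triang (f (h a)) (f (h b)) b).
    split; lra. }
  apply (qi_embedding_is_QI (A + 2 * A * B + 2 * B) (A * B + A)); [split|].
  - intros a b. destruct (Hfh a b) as [E _]. specialize (Hu (h a) (h b)).
    assert (0 <= (2 * A * B + 2 * B) * Rabs (a - b)) by (apply Rmult_le_pos; [nra|apply Rabs_pos]).
    nra.
  - intros a b. destruct (Hfh a b) as [_ E]. specialize (Hl (h a) (h b)).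
    assert (0 <= (2 * A * B + 2 * B) * Rabs (h a - h b)) by (apply Rmult_le_pos; [nra|apply Rabs_pos]).
    nra.
  - intros x. exists (f x). specialize (Hu x (h (f x))). specialize (Hh (f x)).
    assert (A * Rabs (f x - f (h (f x))) <= A * B) by (apply Rmult_le_compat_l; lra).
    lra.
Qed.

Lemma right_qinv_left_qinv A B f h : qi_embedding A f ->
  (forall y, Rabs (y - f (h y)) <= B) -> qi_equiv (fun x => h (f x)) (fun x => x).
Proof.
  intros [Hl Hu] Hh. pose proof (coarse_lipschitz_nonneg _ _ Hl).
  exists (A * B + A). intros x. specialize (Hu (h (f x)) x). specialize (Hh (f x)).
  rewrite Rabs_minus_sym in Hh.
  assert (A * Rabs (f (h (f x)) - f x) <= A * B) by (apply Rmult_le_compat_l; lra).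
  lra.
Qed.

Lemma right_qinv_fixing (S : R -> Prop) A f : 0 <= A -> coarsely_dense A f ->
  (forall x, S x -> f x = x) ->
  exists h, (forall y, S y -> h y = y) /\ forall y, Rabs (y - f (h y)) <= A.
Proof.
  intros HA Hd HS.
  assert (Hex : forall y, exists x, (S y -> x = y) /\ Rabs (y - f x) <= A).
  { intros y. destruct (classic (S y)) as [Sy|nSy].
    - exists y. split; [easy|]. rewrite HS, Rminus_diag, Rabs_R0 by exact Sy. exact HA.
    - destruct (Hd y) as [x Hx]. exists x. split; [easy|exact Hx]. }
  destruct (choice _ Hex) as [h Hh]. exists h. split; intros y; apply Hh.
Qed.

Definition has_qi_rep (N : (R -> R) -> Prop) (f : R -> R) : Prop :=
  is_QI f /\ exists g, is_QI g /\ N g /\ qi_equiv f g.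

Lemma qi_subgroup_has_qi_rep (N : (R -> R) -> Prop) :
  N (fun x => x) ->
  (forall f g, N f -> N g -> N (fun x => f (g x))) ->
  (forall f A, 0 <= A -> coarsely_dense A f -> N f ->
     exists h, N h /\ forall y, Rabs (y - f (h y)) <= A) ->
  qi_subgroup (has_qi_rep N).
Proof.
  intros Nid Ncomp Ninv. split; [|split].
  - split; [exact is_QI_id|]. exists (fun x => x).
    split; [exact is_QI_id|split; [exact Nid|apply qi_equiv_refl]].
  - intros f g [Qf [f' [Qf' [Nf' Ef]]]] [Qg [g' [Qg' [Ng' Eg]]]].
    split; [now apply is_QI_comp|].
    exists (fun x => f' (g' x)). split; [now apply is_QI_comp|split; [now apply Ncomp|]].
    destruct (is_QI_qi_embedding f Qf) as [A [_ [[Lf _] _]]].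
    exact (qi_equiv_comp _ _ _ _ _ Lf Ef Eg).
  - intros f [Qf [f' [Qf' [Nf' Ef]]]].
    destruct (is_QI_qi_embedding f' Qf') as [A [HA [Emb Dense]]].
    destruct (Ninv f' A ltac:(lra) Dense Nf') as [h [Nh Hh]].
    assert (Qh : is_QI h) by exact (right_qinv_is_QI _ _ _ _ Emb Hh).
    destruct (is_QI_qi_embedding f Qf) as [Af [_ [[Lf _] _]]].
    destruct (is_QI_qi_embedding h Qh) as [Ah [_ [[Lh _] _]]].
    exists h. split; [split; [exact Qh|exists h; split; [|split]; auto using qi_equiv_refl]|].
    split.
    + apply qi_equiv_trans with (fun x => f' (h x)).
      * exact (qi_equiv_comp _ _ _ _ _ Lf Ef (qi_equiv_refl h)).
      * exists A. intros y. rewrite Rabs_minus_sym. apply Hh.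
    + apply qi_equiv_trans with (fun x => h (f' x)).
      * exact (qi_equiv_comp _ _ _ _ _ Lh (qi_equiv_refl h) Ef).
      * exact (right_qinv_left_qinv _ _ _ _ Emb Hh).
Qed.

Lemma Qplus_subgroup : qi_subgroup in_Qplus.
Proof.
  apply (qi_subgroup_has_qi_rep id_near_minf).
  - exists 0. easy.
  - intros f g [c1 H1] [c2 H2]. exists (Rmin c1 c2). intros t Ht.
    pose proof (Rmin_l c1 c2). pose proof (Rmin_r c1 c2).
    rewrite H2 by lra. apply H1. lra.
  - intros f A HA Hd [c Hc].
    destruct (right_qinv_fixing (fun t => t <= c) A f HA Hd Hc) as [h [Hfix Hh]].
    exists h. split; [exists c; exact Hfix|exact Hh].
Qed.

Lemma Qminus_subgroup : qi_subgroup in_Qminus.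
Proof.
  apply (qi_subgroup_has_qi_rep id_near_pinf).
  - exists 0. easy.
  - intros f g [c1 H1] [c2 H2]. exists (Rmax c1 c2). intros t Ht.
    pose proof (Rmax_l c1 c2). pose proof (Rmax_r c1 c2).
    rewrite H2 by lra. apply H1. lra.
  - intros f A HA Hd [c Hc].
    destruct (right_qinv_fixing (fun t => c <= t) A f HA Hd Hc) as [h [Hfix Hh]].
    exists h. split; [exists c; exact Hfix|exact Hh].
Qed.

Lemma fixes_ends_comp f g : fixes_ends f -> fixes_ends g -> fixes_ends (fun x => f (g x)).
Proof.
  intros [f1 f2] [g1 g2]. split; intros M.
  - destruct (f1 M) as [T1 H1]. destruct (g1 T1) as [T2 H2].
    exists T2. intros t Ht. apply H1, H2, Ht.
  - destruct (f2 M) as [T1 H1]. destruct (g2 T1) as [T2 H2].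
    exists T2. intros t Ht. apply H1, H2, Ht.
Qed.

(* If [g t <= c] then [g (g t) = g t], so the lower bound forces [t <= c + A];
   beyond that, the lower bound against [g c = c] makes [g] grow at least linearly. *)
Lemma qi_embedding_id_near_minf_fixes_ends A g :
  qi_embedding A g -> id_near_minf g -> fixes_ends g.
Proof.
  intros [Hl Hu] [c Hc]. pose proof (coarse_lipschitz_nonneg _ _ Hl). split; intros M.
  - exists (c + A + A * Rabs (M - c) + 1). intros t Ht.
    assert (0 <= A * Rabs (M - c)) by (apply Rmult_le_pos; [lra|apply Rabs_pos]).
    assert (Hgt : c < g t).
    { destruct (Rlt_le_dec c (g t)) as [|Hle]; [easy|].
      pose proof (Hu t (g t)) as Hb. rewrite (Hc (g t) Hle), Rminus_diag, Rabs_R0 in Hb.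
      pose proof (Rle_abs (t - g t)). lra. }
    destruct (Rle_dec M (g t)) as [|HM]; [easy|exfalso].
    pose proof (Hu t c) as Hb. rewrite (Hc c (Rle_refl c)) in Hb.
    rewrite (Rabs_right (g t - c)) in Hb by lra.
    assert (A * (g t - c) <= A * Rabs (M - c)).
    { apply Rmult_le_compat_l; [lra|]. pose proof (Rle_abs (M - c)). lra. }
    pose proof (Rle_abs (t - c)). lra.
  - exists (Rmin c M). intros t Ht. pose proof (Rmin_l c M). pose proof (Rmin_r c M).
    rewrite Hc; lra.
Qed.

Definition mirror (f : R -> R) (x : R) : R := - f (- x).

Lemma qi_embedding_mirror A f : qi_embedding A f -> qi_embedding A (mirror f).
Proof.
  unfold mirror. intros [Hl Hu].
  assert (E : forall u v : R, Rabs (- u - - v) = Rabs (u - v)).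
  { intros u v. replace (- u - - v) with (- (u - v)) by ring. apply Rabs_Ropp. }
  split; intros x1 x2; rewrite E; rewrite <- (E x1 x2); [apply Hl|apply Hu].
Qed.

Lemma id_near_pinf_mirror f : id_near_pinf f -> id_near_minf (mirror f).
Proof.
  intros [c Hc]. exists (- c). intros t Ht. unfold mirror. rewrite Hc by lra. ring.
Qed.

Lemma fixes_ends_mirror f : fixes_ends (mirror f) -> fixes_ends f.
Proof.
  unfold mirror. intros [H1 H2]. split; intros M.
  - destruct (H2 (- M)) as [T HT]. exists (- T). intros t Ht.
    pose proof (HT (- t) ltac:(lra)). rewrite Ropp_involutive in *. lra.
  - destruct (H1 (- M)) as [T HT]. exists (- T). intros t Ht.
    pose proof (HT (- t) ltac:(lra)). rewrite Ropp_involutive in *. lra.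
Qed.

Lemma is_QI_id_near_minf_fixes_ends g : is_QI g -> id_near_minf g -> fixes_ends g.
Proof.
  intros Q N. destruct (is_QI_qi_embedding g Q) as [A [_ [E _]]].
  exact (qi_embedding_id_near_minf_fixes_ends A g E N).
Qed.

Lemma is_QI_id_near_pinf_fixes_ends g : is_QI g -> id_near_pinf g -> fixes_ends g.
Proof.
  intros Q N. destruct (is_QI_qi_embedding g Q) as [A [_ [E _]]].
  apply fixes_ends_mirror.
  exact (qi_embedding_id_near_minf_fixes_ends A _ (qi_embedding_mirror A g E)
           (id_near_pinf_mirror g N)).
Qed.

Lemma Qplus_in_QIplus f : in_Qplus f -> in_QIplus f.
Proof.
  intros [Q [g [Qg [Ng E]]]]. split; [exact Q|].
  exists g. split; [exact Qg|split; [exact (is_QI_id_near_minf_fixes_ends g Qg Ng)|exact E]].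
Qed.

Lemma Qminus_in_QIplus f : in_Qminus f -> in_QIplus f.
Proof.
  intros [Q [g [Qg [Ng E]]]]. split; [exact Q|].
  exists g. split; [exact Qg|split; [exact (is_QI_id_near_pinf_fixes_ends g Qg Ng)|exact E]].
Qed.

Lemma qi_equiv_of_close_outside A B C F G a b :
  coarse_lipschitz A F -> coarse_lipschitz B G ->
  (forall x, x <= a \/ b <= x -> Rabs (F x - G x) <= C) -> qi_equiv F G.
Proof.
  intros HF HG Hout. pose proof (coarse_lipschitz_nonneg _ _ HF).
  pose proof (coarse_lipschitz_nonneg _ _ HG).
  assert (0 <= (A + B) * Rabs (b - a)) by (apply Rmult_le_pos; [lra|apply Rabs_pos]).
  exists (C + (A + B) * Rabs (b - a) + A + B). intros x.
  destruct (Rle_dec x a) as [Hx|Hx]; [pose proof (Hout x (or_introl Hx)); lra|].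
  destruct (Rle_dec b x) as [Hx'|Hx']; [pose proof (Hout x (or_intror Hx')); lra|].
  assert (Hxa : Rabs (x - a) <= Rabs (b - a)) by (rewrite !Rabs_right by lra; lra).
  pose proof (HF x a). pose proof (HG a x). pose proof (Hout a (or_introl (Rle_refl a))).
  rewrite (Rabs_minus_sym a x) in *.
  assert (A * Rabs (x - a) <= A * Rabs (b - a)) by (apply Rmult_le_compat_l; lra).
  assert (B * Rabs (x - a) <= B * Rabs (b - a)) by (apply Rmult_le_compat_l; lra).
  pose proof (dist_triang (F x) (F a) (G x)). pose proof (dist_triang (F a) (G a) (G x)).
  lra.
Qed.

Lemma Qplus_Qminus_trivial f : in_Qplus f -> in_Qminus f -> qi_equiv f (fun x => x).
Proof.
  intros [Q [g1 [_ [[c1 N1] [C1 E1]]]]] [_ [g2 [_ [[c2 N2] [C2 E2]]]]].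
  destruct (is_QI_qi_embedding f Q) as [A [_ [[Lf _] _]]].
  destruct (qi_embedding_id 1 (Rle_refl 1)) as [Lid _].
  apply (qi_equiv_of_close_outside A 1 (Rmax C1 C2) f (fun x => x) c1 c2 Lf Lid).
  pose proof (Rmax_l C1 C2). pose proof (Rmax_r C1 C2).
  intros x [Hx|Hx]; [specialize (E1 x); rewrite N1 in E1|specialize (E2 x); rewrite N2 in E2];
    auto; lra.
Qed.

Lemma Qplus_Qminus_commute f g : in_Qplus f -> in_Qminus g ->
  qi_equiv (fun x => f (g x)) (fun x => g (f x)).
Proof.
  intros [Qf [f' [Qf' [Nf Ef]]]] [Qg [g' [Qg' [Ng Eg]]]].
  destruct (is_QI_qi_embedding f Qf) as [Af [_ [[Lf _] _]]].
  destruct (is_QI_qi_embedding g Qg) as [Ag [_ [[Lg _] _]]].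
  destruct (is_QI_qi_embedding f' Qf') as [Af' [_ [Emf _]]].
  destruct (is_QI_qi_embedding g' Qg') as [Ag' [_ [Emg _]]].
  destruct (qi_embedding_comp _ _ _ _ Emf Emg) as [Lfg _].
  destruct (qi_embedding_comp _ _ _ _ Emg Emf) as [Lgf _].
  destruct (is_QI_id_near_minf_fixes_ends f' Qf' Nf) as [Pf _].
  destruct (is_QI_id_near_pinf_fixes_ends g' Qg' Ng) as [_ Pg].
  destruct Nf as [c1 N1]. destruct Ng as [c2 N2].
  destruct (Pf c2) as [T1 HT1]. destruct (Pg c1) as [T2 HT2].
  apply qi_equiv_trans with (fun x => f' (g' x)); [exact (qi_equiv_comp _ _ _ _ _ Lf Ef Eg)|].
  apply qi_equiv_trans with (fun x => g' (f' x));
    [|apply qi_equiv_sym; exact (qi_equiv_comp _ _ _ _ _ Lg Eg Ef)].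
  (* Far left both composites equal [g'], far right both equal [f']. *)
  apply (qi_equiv_of_close_outside _ _ 0 _ _ (Rmin T2 c1) (Rmax T1 c2) Lfg Lgf).
  pose proof (Rmin_l T2 c1). pose proof (Rmin_r T2 c1).
  pose proof (Rmax_l T1 c2). pose proof (Rmax_r T1 c2).
  intros x [Hx|Hx].
  - rewrite (N1 x), (N1 (g' x)) by (try apply HT2; lra).
    rewrite Rminus_diag, Rabs_R0. lra.
  - rewrite (N2 x), (N2 (f' x)) by (try apply HT1; lra).
    rewrite Rminus_diag, Rabs_R0. lra.
Qed.

Lemma Qplus_Qminus_comp_in_QIplus g h : in_Qplus g -> in_Qminus h ->
  in_QIplus (fun x => g (h x)).
Proof.
  intros [Qg [g' [Qg' [Ng Eg]]]] [Qh [h' [Qh' [Nh Eh]]]].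
  split; [now apply is_QI_comp|].
  exists (fun x => g' (h' x)). split; [now apply is_QI_comp|split].
  - apply fixes_ends_comp.
    + exact (is_QI_id_near_minf_fixes_ends g' Qg' Ng).
    + exact (is_QI_id_near_pinf_fixes_ends h' Qh' Nh).
  - destruct (is_QI_qi_embedding g Qg) as [A [_ [[Lg _] _]]].
    exact (qi_equiv_comp _ _ _ _ _ Lg Eg Eh).
Qed.

Lemma discrete_crossing (u : nat -> R) y n :
  u 0%nat <= y -> y < u n -> exists k, u k <= y /\ y < u (S k).
Proof.
  intros H0. induction n as [|n IH]; intros Hn; [lra|].
  destruct (Rle_dec (u n) y) as [Hle|Hgt]; [now exists n|apply IH; lra].
Qed.

(* Walking right from [p] in unit steps until [f] passes [f x] finds [q >= p]
   with [f q] within [2 A] of [f x]; hence [q], and so [p], is close to [x]. *)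
Lemma qi_embedding_coarse_monotone A f : qi_embedding A f ->
  (forall M, exists T, forall t, T <= t -> M <= f t) ->
  forall x p, x <= p -> f x <= f p + (A * (2 * A * A + A) + A).
Proof.
  intros [Hl Hu] Hf x p Hxp. pose proof (coarse_lipschitz_nonneg _ _ Hl).
  assert (0 <= A * (2 * A * A + A)) by (apply Rmult_le_pos; nra).
  destruct (Rle_dec (f x) (f p)) as [|Hgt]; [lra|].
  destruct (Hf (f x + 1)) as [T HT]. destruct (INR_unbounded (T - p)) as [n Hn].
  destruct (discrete_crossing (fun k => f (p + INR k)) (f x) n) as [k [K1 K2]].
  - simpl. rewrite Rplus_0_r. lra.
  - pose proof (HT (p + INR n)). lra.
  - cbv beta in K1, K2. rewrite S_INR, <- Rplus_assoc in K2.
    set (q := p + INR k) in *. assert (p <= q) by (pose proof (pos_INR k); unfold q; lra).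
    pose proof (Hl (q + 1) q) as Hstep.
    replace (q + 1 - q) with 1 in Hstep by ring. rewrite Rabs_R1, Rabs_right in Hstep by lra.
    assert (Hfq : Rabs (f q - f x) <= 2 * A) by (rewrite Rabs_left1 by lra; lra).
    pose proof (Hu q x) as Hqx. rewrite Rabs_right in Hqx by lra.
    assert (A * Rabs (f q - f x) <= A * (2 * A)) by (apply Rmult_le_compat_l; lra).
    pose proof (Hl x p) as Hxp'. rewrite (Rabs_left1 (x - p)) in Hxp' by lra.
    assert (A * - (x - p) <= A * (2 * A * A + A)) by (apply Rmult_le_compat_l; lra).
    pose proof (Rle_abs (f x - f p)). lra.
Qed.

Definition glue (F G : R -> R) (x : R) : R := if Rle_dec x 0 then F x else G x.

Lemma glue_le F G x : x <= 0 -> glue F G x = F x.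
Proof. intros Hx. unfold glue. destruct (Rle_dec x 0); [easy|lra]. Qed.

Lemma glue_ge F G x : F 0 = G 0 -> 0 <= x -> glue F G x = G x.
Proof.
  intros E Hx. unfold glue. destruct (Rle_dec x 0); [|easy].
  replace x with 0 by lra. exact E.
Qed.

(* Across [0], [|x - y| = |x| + |y|], and the one-sided bounds on [F] and [G]
   give [|F x| + |G y| <= |F x - G y| + 4 B]. *)
Lemma qi_embedding_across_zero A B F G x y :
  qi_embedding A F -> qi_embedding A G -> F 0 = 0 -> G 0 = 0 ->
  (forall x, x <= 0 -> F x <= B) -> (forall y, 0 <= y -> - B <= G y) ->
  x <= 0 -> 0 <= y ->
  Rabs (x - y) <= (2 * A + 4 * A * B) * Rabs (F x - G y) + (2 * A + 4 * A * B) /\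
  Rabs (F x - G y) <= (2 * A + 4 * A * B) * Rabs (x - y) + (2 * A + 4 * A * B).
Proof.
  intros [Fl Fu] [Gl Gu] F0 G0 FB GB Hx Hy. pose proof (coarse_lipschitz_nonneg _ _ Fl).
  assert (0 <= B) by (pose proof (FB 0 (Rle_refl 0)); lra).
  pose proof (Fl x 0). pose proof (Fu x 0). pose proof (Gl y 0). pose proof (Gu y 0).
  rewrite F0, G0, !Rminus_0_r in *.
  pose proof (FB x Hx). pose proof (GB y Hy).
  assert (Exy : Rabs (x - y) = Rabs x + Rabs y)
    by (rewrite Rabs_left1, (Rabs_left1 x), (Rabs_right y) by lra; ring).
  assert (Rabs (F x) <= - F x + 2 * B) by (unfold Rabs; destruct (Rcase_abs (F x)); lra).
  assert (Rabs (G y) <= G y + 2 * B) by (unfold Rabs; destruct (Rcase_abs (G y)); lra).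
  assert (G y - F x <= Rabs (F x - G y)) by (rewrite Rabs_minus_sym; apply Rle_abs).
  pose proof (Rabs_sub_triang (F x) (G y)).
  assert (A * (Rabs (F x) + Rabs (G y)) <= A * (Rabs (F x - G y) + 4 * B))
    by (apply Rmult_le_compat_l; lra).
  assert (0 <= (A + 4 * A * B) * Rabs (x - y)) by (apply Rmult_le_pos; [nra|apply Rabs_pos]).
  assert (0 <= (A + 4 * A * B) * Rabs (F x - G y))
    by (apply Rmult_le_pos; [nra|apply Rabs_pos]).
  assert (0 <= A * B) by nra.
  rewrite Exy in *. split; lra.
Qed.

Lemma glue_qi_embedding A B F G :
  qi_embedding A F -> qi_embedding A G -> F 0 = 0 -> G 0 = 0 ->
  (forall x, x <= 0 -> F x <= B) -> (forall y, 0 <= y -> - B <= G y) ->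
  qi_embedding (2 * A + 4 * A * B) (glue F G).
Proof.
  intros HF HG F0 G0 FB GB.
  pose proof (coarse_lipschitz_nonneg _ _ (proj1 HF)).
  assert (0 <= B) by (pose proof (FB 0 (Rle_refl 0)); lra).
  assert (HK : A <= 2 * A + 4 * A * B) by nra.
  pose proof (qi_embedding_across_zero A B F G) as Across.
  set (K := 2 * A + 4 * A * B) in *.
  destruct (qi_embedding_mono _ _ _ HK HF) as [Fl Fu].
  destruct (qi_embedding_mono _ _ _ HK HG) as [Gl Gu].
  assert (E : F 0 = G 0) by congruence.
  assert (Hcases : forall x1 x2,
    Rabs (x1 - x2) <= K * Rabs (glue F G x1 - glue F G x2) + K /\
    Rabs (glue F G x1 - glue F G x2) <= K * Rabs (x1 - x2) + K).
  { intros x1 x2.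
    destruct (Rle_dec x1 0) as [h1|h1]; destruct (Rle_dec x2 0) as [h2|h2].
    - rewrite !glue_le by easy. split; [apply Fu|apply Fl].
    - rewrite glue_le, glue_ge by (easy || lra). apply Across; auto; lra.
    - rewrite (Rabs_minus_sym x1), (Rabs_minus_sym (glue F G x1)).
      rewrite glue_le, glue_ge by (easy || lra). apply Across; auto; lra.
    - rewrite !glue_ge by (easy || lra). split; [apply Gu|apply Gl]. }
  split; intros x1 x2; apply Hcases.
Qed.

Lemma glue_coarsely_dense C F G : F 0 = G 0 ->
  (forall y, y <= 0 -> exists x, x <= 0 /\ Rabs (y - F x) <= C) ->
  (forall y, 0 <= y -> exists x, 0 <= x /\ Rabs (y - G x) <= C) ->
  coarsely_dense C (glue F G).
Proof.
  intros E HF HG y. destruct (Rle_dec y 0) as [Hy|Hy].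
  - destruct (HF y Hy) as [x [Hx Hd]]. exists x. now rewrite glue_le.
  - destruct (HG y ltac:(lra)) as [x [Hx Hd]]. exists x. now rewrite glue_ge.
Qed.

Lemma id_coarsely_dense_on (P : R -> Prop) C : 0 <= C ->
  forall y, P y -> exists x, P x /\ Rabs (y - x) <= C.
Proof. intros HC y Hy. exists y. split; [exact Hy|]. now rewrite Rminus_diag, Rabs_R0. Qed.

(* A point approximating [y <= 0] from the wrong side forces [y] near [0 = f 0]. *)
Lemma coarsely_dense_on_nonpos A B f : f 0 = 0 -> coarsely_dense A f ->
  (forall x, 0 <= x -> - B <= f x) ->
  forall y, y <= 0 -> exists x, x <= 0 /\ Rabs (y - f x) <= A + B.
Proof.
  intros F0 Hd HB y Hy. assert (0 <= B) by (pose proof (HB 0 (Rle_refl 0)); lra).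
  destruct (Hd y) as [x Hx]. destruct (Rle_dec x 0) as [Hx0|Hx0].
  - exists x. split; [exact Hx0|lra].
  - exists 0. split; [lra|]. pose proof (HB x ltac:(lra)). pose proof (Rle_abs (f x - y)).
    rewrite Rabs_minus_sym in Hx. rewrite F0, Rminus_0_r, Rabs_left1 by lra. lra.
Qed.

Lemma coarsely_dense_on_nonneg A B f : f 0 = 0 -> coarsely_dense A f ->
  (forall x, x <= 0 -> f x <= B) ->
  forall y, 0 <= y -> exists x, 0 <= x /\ Rabs (y - f x) <= A + B.
Proof.
  intros F0 Hd HB y Hy. assert (0 <= B) by (pose proof (HB 0 (Rle_refl 0)); lra).
  destruct (Hd y) as [x Hx]. destruct (Rle_dec 0 x) as [Hx0|Hx0].
  - exists x. split; [exact Hx0|lra].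
  - exists 0. split; [lra|]. pose proof (HB x ltac:(lra)). pose proof (Rle_abs (y - f x)).
    rewrite F0, Rminus_0_r, Rabs_right by lra. lra.
Qed.

(* [g (h x)] differs from [f x] only when [x <= 0] and [0 < f x], and then
   [f x] is bounded by coarse monotonicity. *)
Lemma QIplus_normalized_decomposition A f : 1 <= A -> qi_embedding A f ->
  coarsely_dense A f -> f 0 = 0 -> (forall M, exists T, forall t, T <= t -> M <= f t) ->
  in_Qplus (glue (fun x => x) f) /\ in_Qminus (glue f (fun x => x)) /\
  qi_equiv f (fun x => glue (fun x => x) f (glue f (fun x => x) x)).
Proof.
  intros HA Emb Dense F0 Hinf.
  pose proof (qi_embedding_coarse_monotone A f Emb Hinf) as Mono.
  set (B := A * (2 * A * A + A) + A) in Mono.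
  assert (FB : forall x, x <= 0 -> f x <= B) by (intros x Hx; pose proof (Mono x 0 Hx); lra).
  assert (GB : forall y, 0 <= y -> - B <= f y) by (intros y Hy; pose proof (Mono 0 y Hy); lra).
  assert (0 <= B) by (pose proof (FB 0 (Rle_refl 0)); lra).
  pose proof (qi_embedding_id A HA) as Id.
  assert (Qg : is_QI (glue (fun x => x) f)).
  { apply (qi_embedding_is_QI (2 * A + 4 * A * B) (A + B)).
    - apply glue_qi_embedding; auto. intros x Hx. lra.
    - apply glue_coarsely_dense; [easy|apply id_coarsely_dense_on; lra|].
      exact (coarsely_dense_on_nonneg A B f F0 Dense FB). }
  assert (Qh : is_QI (glue f (fun x => x))).
  { apply (qi_embedding_is_QI (2 * A + 4 * A * B) (A + B)).
    - apply glue_qi_embedding; auto. intros y Hy. lra.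
    - apply glue_coarsely_dense; [easy| |apply id_coarsely_dense_on; lra].
      exact (coarsely_dense_on_nonpos A B f F0 Dense GB). }
  split; [|split].
  - split; [exact Qg|]. exists (glue (fun x => x) f).
    split; [exact Qg|split; [|apply qi_equiv_refl]].
    exists 0. intros t Ht. now apply glue_le.
  - split; [exact Qh|]. exists (glue f (fun x => x)).
    split; [exact Qh|split; [|apply qi_equiv_refl]].
    exists 0. intros t Ht. now apply glue_ge.
  - pose proof (coarse_lipschitz_nonneg _ _ (proj1 Emb)).
    exists (A * B + A + B). intros x. assert (0 <= A * B) by nra.
    destruct (Rle_dec x 0) as [Hx|Hx].
    + rewrite (glue_le f (fun x => x) x Hx).
      destruct (Rle_dec (f x) 0) as [Hfx|Hfx].
      * rewrite glue_le, Rminus_diag, Rabs_R0 by exact Hfx. lra.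
      * rewrite glue_ge by (easy || lra). pose proof (FB x Hx).
        pose proof (proj1 Emb (f x) 0) as Hl.
        rewrite F0, !Rminus_0_r, (Rabs_right (f x)) in Hl by lra.
        assert (A * f x <= A * B) by (apply Rmult_le_compat_l; lra).
        pose proof (Rabs_sub_triang (f x) (f (f x))). rewrite (Rabs_right (f x)) in * by lra.
        lra.
    + rewrite (glue_ge f (fun x => x) x), glue_ge, Rminus_diag, Rabs_R0 by (easy || lra).
      lra.
Qed.

Lemma QIplus_decomposition f : in_QIplus f ->
  exists g h, in_Qplus g /\ in_Qminus h /\ qi_equiv f (fun x => g (h x)).
Proof.
  intros [_ [f0 [Q0 [[Hinf _] E]]]].
  destruct (is_QI_qi_embedding f0 Q0) as [A [HA [[Hl Hu] Hd]]].
  set (f1 := fun x => f0 x - f0 0).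
  assert (Shift : forall x1 x2, f1 x1 - f1 x2 = f0 x1 - f0 x2) by (intros; unfold f1; ring).
  assert (Emb : qi_embedding A f1) by (split; intros x1 x2; rewrite Shift; auto).
  assert (Dense : coarsely_dense A f1).
  { intros y. destruct (Hd (y + f0 0)) as [x Hx]. exists x.
    replace (y - f1 x) with (y + f0 0 - f0 x) by (unfold f1; ring). exact Hx. }
  assert (Inf1 : forall M, exists T, forall t, T <= t -> M <= f1 t).
  { intros M. destruct (Hinf (M + f0 0)) as [T HT]. exists T. intros t Ht.
    pose proof (HT t Ht). unfold f1. lra. }
  assert (F0 : f1 0 = 0) by (unfold f1; ring).
  destruct (QIplus_normalized_decomposition A f1 HA Emb Dense F0 Inf1) as [Qg [Qh Efgh]].
  exists (glue (fun x => x) f1), (glue f1 (fun x => x)). split; [exact Qg|split; [exact Qh|]].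
  apply (qi_equiv_trans _ f0); [exact E|]. apply (qi_equiv_trans _ f1); [|exact Efgh].
  exists (Rabs (f0 0)). intros x. unfold f1.
  replace (f0 x - (f0 x - f0 0)) with (f0 0) by ring. lra.
Qed.

Theorem mainTheorem2 :
  (* Q_+ and Q_- are subgroups of QI(R) contained in QI^+(R) *)
  qi_subgroup in_Qplus /\ qi_subgroup in_Qminus /\
  (forall f, in_Qplus f -> in_QIplus f) /\
  (forall f, in_Qminus f -> in_QIplus f) /\
  (* Q_+ ∩ Q_- is trivial *)
  (forall f, in_Qplus f -> in_Qminus f -> qi_equiv f (fun x => x)) /\
  (* elements of Q_+ commute with elements of Q_- *)
  (forall f g, in_Qplus f -> in_Qminus g ->
     qi_equiv (fun x => f (g x)) (fun x => g (f x))) /\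
  (* QI^+(R) = Q_+ Q_- *)
  (forall g h, in_Qplus g -> in_Qminus h -> in_QIplus (fun x => g (h x))) /\
  (forall f, in_QIplus f ->
     exists g h, in_Qplus g /\ in_Qminus h /\ qi_equiv f (fun x => g (h x))).
Proof.
  split; [exact Qplus_subgroup|].
  split; [exact Qminus_subgroup|].
  split; [exact Qplus_in_QIplus|].
  split; [exact Qminus_in_QIplus|].
  split; [exact Qplus_Qminus_trivial|].
  split; [exact Qplus_Qminus_commute|].
  split; [exact Qplus_Qminus_comp_in_QIplus|].
  exact QIplus_decomposition.
Qed.
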